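(* Let $X$ be a Banach space, $B$ an admissible Banach sequence space over $\mathbb{Z}$, and $(A_m)_{m\in\mathbb{Z}}$ a sequence of invertible bounded linear operators on $X$ with $\sup_{m\in\mathbb{Z}}\lVert A_m\rVert<\infty$ that admits an exponential dichotomy. Let $c>0$ be a constant as described in the context. Let $f_n\colon X\to X$, $n\in\mathbb{Z}$, be differentiable maps such that $\lVert d_xf_n\rVert\le c$ for all $x\in X$, $n\in\mathbb{Z}$; $\sup_{n\in\mathbb{Z}}\sup_{x\in X}\lVert f_n(x)\rVert<\infty$; and there exist $D>0$, $r>0$ with $\lVert d_xf_n-d_yf_n\rVert\le D\lVert x-y\rVert^r$ for all $x,y\in X$, $n\in\mathbb{Z}$. Put $F_n=A_n+f_n$ and consider the system $x_{n+1}=F_n(x_n)$, $n\in\mathbb{Z}$. Then this system has the $B$-Lipschitz shadowing property: there exists $L>0$ such that for every $\varepsilon>0$ sufficiently small and every $(L\varepsilon,B)$-pseudotrajectory $(y_n)_{n\in\mathbb{Z}}$ there exists a sequence $(x_n)_{n\in\mathbb{Z}}$ with $x_{n+1}=F_n(x_n)$ for all $n\in\mathbb{Z}$, $(x_n-y_n)_{n\in\mathbb{Z}}\in X_B$ and $\lVert (x_n-y_n)_{n\in\mathbb{Z}}\rVert_B\le\varepsilon$. Furthermore, if $\varepsilon>0$ is sufficiently small, the sequence $(x_n)_{n\in\mathbb{Z}}$ with these properties is unique.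
   Context: A normed sequence space over $\mathbb{Z}$ is a linear subspace $B$ of the space of all real sequences $\mathbf s=(s_n)_{n\in\mathbb{Z}}$ with a norm $\lVert\cdot\rVert_B$ such that whenever $\mathbf s'\in B$ and $|s_n|\le|s'_n|$ for all $n$, then $\mathbf s\in B$ and $\lVert\mathbf s\rVert_B\le\lVert\mathbf s'\rVert_B$; it is a Banach sequence space if it is complete. $B$ is admissible if (1) for each $n$, the indicator sequence $\chi_{\{n\}}$ lies in $B$ with $\lVert\chi_{\{n\}}\rVert_B>0$, and (2) for every $\mathbf s\in B$ and $m\in\mathbb{Z}$ the shifted sequence $(s_{n+m})_{n\in\mathbb{Z}}$ lies in $B$ and has the same norm; it is assumed that $\lVert\chi_{\{0\}}\rVert_B=1$. For a Banach space $X$, $X_B$ is the set of sequences $\mathbf x=(x_n)_{n\in\mathbb{Z}}\subset X$ with $(\lVert x_n\rVert)_{n\in\mathbb{Z}}\in B$, normed by $\lVert\mathbf x\rVert_B=\lVert(\lVert x_n\rVert)_{n\in\mathbb{Z}}\rVert_B$ (a Banach space). For invertible bounded operators $(A_m)$, set $\mathcal A(m,n)=A_{m-1}\cdots A_n$ for $m>n$, $\mathrm{Id}$ for $m=n$, $A_m^{-1}\cdots A_{n-1}^{-1}$ for $m<n$. $(A_m)$ admits an exponential dichotomy if there are projections $P_m$ on $X$ with $P_{m+1}A_m=A_mP_m$ and constants $C,\lambda>0$ with $\lVert\mathcal A(m,n)P_n\rVert\le Ce^{-\lambda(m-n)}$ for $m\ge n$ and $\lVert\mathcal A(m,n)(\mathrm{Id}-P_n)\rVert\le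 Ce^{-\lambda(n-m)}$ for $m\le n$. The constant $c>0$ is such that there is $K>0$ for which every sequence $(B_m)_{m\in\mathbb{Z}}$ of bounded linear operators on $X$ with $\sup_m\lVert A_m-B_m\rVert\le c$ admits an exponential dichotomy, and the operator $\mathbb B$ on $X_B$ given by $(\mathbb B\mathbf x)_n=B_{n-1}x_{n-1}$ has $\mathrm{Id}-\mathbb B$ invertible with $\lVert(\mathrm{Id}-\mathbb B)^{-1}\rVert\le K$ (such $c$ exists because $(A_m)$ admits an exponential dichotomy). Given $\delta>0$, a sequence $(y_n)_{n\in\mathbb{Z}}\subset X$ is a $(\delta,B)$-pseudotrajectory for $x_{n+1}=F_n(x_n)$ if $(y_{n+1}-F_n(y_n))_{n\in\mathbb{Z}}\in X_B$ and $\lVert(y_{n+1}-F_n(y_n))_{n\in\mathbb{Z}}\rVert_B\le\delta$. *)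

From HB Require Import structures.
From mathcomp Require Import all_boot all_order all_algebra.
From mathcomp Require Import all_classical all_reals all_analysis.
Set Implicit Arguments. Unset Strict Implicit. Unset Printing Implicit Defensive.
Import Order.TTheory GRing.Theory Num.Theory.
Import numFieldNormedType.Exports.
Local Open Scope ring_scope.
Local Open Scope classical_set_scope.

Section SeqSpace.
Variable R : realType.

Definition seq_indicator (n : int) : int -> R := fun k => if k == n then 1 else 0.
Definition seq_shift (s : int -> R) (m : int) : int -> R := fun n => s (n + m).

(* B is given by its carrier [mem] and its norm [bnorm] (only meaningful on mem). *)
Record admissible_banach_seq_space (mem : set (int -> R)) (bnorm : (int -> R) -> R)
  : Prop := {
  bss_mem0 : mem (fun _ => 0);
  bss_memD : forall s t, mem s -> mem t -> mem (fun n => s n + t n);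
  bss_memZ : forall (a : R) s, mem s -> mem (fun n => a * s n);
  bss_norm_ge0 : forall s, mem s -> 0 <= bnorm s;
  bss_norm_eq0 : forall s, mem s -> bnorm s = 0 -> forall n, s n = 0;
  bss_normD : forall s t, mem s -> mem t -> bnorm (fun n => s n + t n) <= bnorm s + bnorm t;
  bss_normZ : forall (a : R) s, mem s -> bnorm (fun n => a * s n) = `|a| * bnorm s;
  bss_solid : forall s s', mem s' -> (forall n, `|s n| <= `|s' n|) ->
     mem s /\ bnorm s <= bnorm s';
  bss_complete : forall u : nat -> int -> R, (forall k, mem (u k)) ->
     (forall e : R, 0 < e -> exists N : nat, forall k l : nat, (N <= k)%N -> (N <= l)%N ->
        bnorm (fun n => u k n - u l n) < e) ->
     exists s, mem s /\ (forall e : R, 0 < e -> exists N : nat, forall k : nat, (N <= k)%N ->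
        bnorm (fun n => u k n - s n) < e);
  bss_indicator : forall n, mem (seq_indicator n) /\ 0 < bnorm (seq_indicator n);
  bss_shift : forall s m, mem s -> mem (seq_shift s m) /\ bnorm (seq_shift s m) = bnorm s;
  bss_indicator0 : bnorm (seq_indicator 0) = 1
}.
End SeqSpace.

Section XB.
Variables (R : realType) (X : normedModType R).
Definition XB_mem (mem : set (int -> R)) (x : int -> X) : Prop :=
  mem (fun n => `|x n|).
Definition XB_norm (bnorm : (int -> R) -> R) (x : int -> X) : R :=
  bnorm (fun n => `|x n|).

Definition bounded_linear (T : X -> X) : Prop :=
  (forall (a : R) u v, T (a *: u + v) = a *: T u + T v) /\
  (exists M : R, forall x, `|T x| <= M * `|x|).

(* cocycle: F = forward maps, G = backward maps (inverses on the relevant spaces) *)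
Definition cocycle (F G : int -> X -> X) (m n : int) : X -> X :=
  if n < m then (fun v => (iter `|m - n|%N (fun p : int * X => (p.1 + 1, F p.1 p.2)) (n, v)).2)
  else if m == n then id
  else (fun v => (iter `|n - m|%N (fun p : int * X => (p.1 - 1, G (p.1 - 1) p.2)) (n, v)).2).

(* For invertible B_m this is exactly the definition of
   the paper (Binv m necessarily agrees with B_m^{-1} on ker P_{m+1}); for
   general bounded B_m it is the standard one: B_m maps ker P_m bijectively
   onto ker P_{m+1}, with Binv m the inverse of that restriction. *)
Definition exp_dichotomy (B : int -> X -> X) : Prop :=
  exists (P Binv : int -> X -> X) (C lam : R), 0 < C /\ 0 < lam /\
  (forall m, bounded_linear (P m) /\ forall x, P m (P m x) = P m x) /\
  (forall m x, P (m + 1) (B m x) = B m (P m x)) /\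
  (forall m y, P (m + 1) y = 0 -> P m (Binv m y) = 0 /\ B m (Binv m y) = y) /\
  (forall m x, P m x = 0 -> Binv m (B m x) = x) /\
  (forall m n : int, n <= m -> forall v,
      `|cocycle B Binv m n (P n v)| <= C * expR (- lam * (m - n)%:~R) * `|v|) /\
  (forall m n : int, m <= n -> forall v,
      `|cocycle B Binv m n (v - P n v)| <= C * expR (- lam * (n - m)%:~R) * `|v|).

Definition admissible_perturbation_constant (mem : set (int -> R))
    (bnorm : (int -> R) -> R) (A : int -> X -> X) (c : R) : Prop :=
  0 < c /\ exists K : R, 0 < K /\
  forall B : int -> X -> X,
    (forall m, bounded_linear (B m)) ->
    (forall m x, `|A m x - B m x| <= c * `|x|) ->
    exp_dichotomy B /\
    (* Id - BB is a bounded invertible operator on X_B with inverse norm <= K,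
       where (BB x)_n = B_{n-1} x_{n-1} *)
    (forall x, XB_mem mem x -> XB_mem mem (fun n => x n - B (n - 1) (x (n - 1)))) /\
    (forall y, XB_mem mem y ->
       exists x, XB_mem mem x /\ (forall n, x n - B (n - 1) (x (n - 1)) = y n) /\
                 XB_norm bnorm x <= K * XB_norm bnorm y) /\
    (forall x x', XB_mem mem x -> XB_mem mem x' ->
       (forall n, x n - B (n - 1) (x (n - 1)) = x' n - B (n - 1) (x' (n - 1))) -> x = x').

Definition pseudotrajectory (mem : set (int -> R)) (bnorm : (int -> R) -> R)
    (F : int -> X -> X) (delta : R) (y : int -> X) : Prop :=
  XB_mem mem (fun n => y (n + 1) - F n (y n)) /\
  XB_norm bnorm (fun n => y (n + 1) - F n (y n)) <= delta.
End XB.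

From HB Require Import structures.
From mathcomp Require Import all_boot all_order all_algebra.
From mathcomp Require Import all_classical all_reals all_analysis.
From mathcomp Require Import ring.
Set Implicit Arguments. Unset Strict Implicit. Unset Printing Implicit Defensive.
Import Order.TTheory GRing.Theory Num.Theory.
Import numFieldNormedType.Exports.
Local Open Scope ring_scope.
Local Open Scope classical_set_scope.

(* Write a candidate orbit as [x = y + z].  Then [x] is an orbit iff
   [z_n - B_(n-1) z_(n-1) = N(z)_n], where [B_m = A_m + d_(y_m) f_m] lies within [c] of
   [A_m], so that [Id - BB] is invertible on [X_B] with inverse of norm at most [K], and
   where [N] collects the defect of [y] and the remainder of the linearization of [f]
   along [y].  By the mean value inequality and the Hoelder continuity of [df], [N] is
   [D eps^r]-Lipschitz on the [eps]-ball of [X_B].  Taking [K D eps0^r = 1/2] and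
   [L = 1/(2K)] makes [(Id - BB)^-1 N] a [1/2]-contraction of that ball into itself;
   its unique fixed point is the shadowing orbit. *)

Lemma subrACA (V : zmodType) (a b c d : V) : (a - b) - (c - d) = (a - c) - (b - d).
Proof. by rewrite opprD addrACA -opprD. Qed.

Lemma subr_addACA (V : zmodType) (a b c d : V) : (a + b) - (c + d) = (a - c) + (b - d).
Proof. by rewrite opprD addrACA. Qed.

Section MeanValue.
Variables (R : realType) (X : normedModType R).

Lemma differentiable_remainder_le (g : X -> X) (x : X) :
  differentiable g x -> forall e : R, 0 < e -> exists2 d : R, 0 < d &
  forall u : X, `|u| < d -> `|g (x + u) - g x - 'd g x u| <= e * `|u|.
Proof.
move=> /diff_locally dg e e0.
have /nbhs_ballP [d d0 Hd] := (eqaddoP _ _ _ _).1 dg e e0.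
exists d => // u ud.
have := Hd u; rewrite -ball_normE /ball_ /= sub0r normrN => /(_ ud) /=.
by rewrite !fctE /= [u + x]addrC opprD addrA.
Qed.

Lemma derivative_local_lipschitz (h : R -> X) (t M e d : R) (v : X) :
  `|v| <= M -> (forall s, `|s| < d -> `|h (t + s) - h t - s *: v| <= e * `|s|) ->
  forall u, `|u - t| < d -> `|h u - h t| <= (M + e) * `|u - t|.
Proof.
move=> vM hv u ut; have := hv (u - t) ut; rewrite subrKC => hr.
rewrite -[h u - h t](subrK ((u - t) *: v)) mulrDl addrC.
apply: le_trans (ler_normD _ _) _; apply: lerD => //.
by rewrite normrZ mulrC ler_wpM2r.
Qed.

Lemma norm_chain_le (h : R -> X) (L e s t u : R) :
  `|h s - h 0| <= L * s + e -> `|h t - h s| <= L * (t - s) -> `|h u - h t| <= L * (u - t) ->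
  `|h u - h 0| <= L * u + e.
Proof.
move=> hs hts hut.
have -> : h u - h 0 = (h u - h t) + ((h t - h s) + (h s - h 0)) by rewrite !addrA !subrK.
apply: le_trans (ler_normD _ _) _; apply: le_trans (lerD hut (ler_normD _ _)) _.
apply: le_trans (lerD (lexx _) (lerD hts hs)) _.
by rewrite !addrA -!mulrDr addrA !subrK.
Qed.

(* Continuous induction: the set of [t] up to which [|h s - h 0| <= (M + e) s + e]
   holds cannot have a supremum below [1]. *)
Lemma mean_value_le (h : R -> X) (M : R) :
  (forall t, 0 <= t -> t <= 1 -> exists2 v : X, `|v| <= M &
     forall e, 0 < e -> exists2 d, 0 < d &
       forall s, `|s| < d -> `|h (t + s) - h t - s *: v| <= e * `|s|) ->
  `|h 1 - h 0| <= M.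
Proof.
move=> hd; apply/ler_addgt0Pr => e2 e20.
pose e := e2 / 2; have e0 : 0 < e by rewrite divr_gt0.
pose S := [set t : R | (0 <= t <= 1) /\
  forall s, 0 <= s -> s <= t -> `|h s - h 0| <= (M + e) * s + e].
have S0 : S 0.
  split; first by rewrite lexx ler01.
  move=> s s0 s0'; have -> : s = 0 by apply/eqP; rewrite eq_le s0 s0'.
  by rewrite subrr normr0 mulr0 add0r ltW.
have supS : has_sup S by split; [exists 0 | exists 1 => t [/andP[]]].
pose tau := sup S.
have tau_ub : forall t, S t -> t <= tau := sup_upper_bound supS.
have tau0 : 0 <= tau := tau_ub 0 S0.
have tau1 : tau <= 1 by apply: ge_sup; [exists 0 | move=> t [/andP[]]].
have [v vM hv] := hd tau tau0 tau1.
have [d d0 hvd] := hv e e0.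
have loc := derivative_local_lipschitz vM hvd.
have [s' Ss' s'tau'] := sup_adherent d0 supS.
have s'tau : s' <= tau := tau_ub _ Ss'.
have S_right : forall T, tau <= T -> T <= 1 -> T <= tau + d / 2 -> S T.
  move=> T tT T1 Td; split; first by rewrite T1 andbT (le_trans tau0 tT).
  move=> u u0 uT; have [ut|tu] := ltP u tau.
    have [w Sw tw] : exists2 w, S w & tau - (tau - u) < w.
      by apply: sup_adherent supS; rewrite subr_gt0.
    by apply: Sw.2 => //; apply: ltW; rewrite opprB addrC subrK in tw.
  have hs' : `|h s' - h 0| <= (M + e) * s' + e by case: Ss' => /andP[s'0 _]; apply.
  apply: (norm_chain_le (t := tau) hs').
    rewrite distrC -[tau - s']ger0_norm ?subr_ge0 // [`|tau - s'|]distrC.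
    apply: loc; rewrite distrC ger0_norm ?subr_ge0 //.
    by rewrite ltrBlDl -ltrBlDr.
  rewrite -[u - tau]ger0_norm ?subr_ge0 //; apply: loc.
  rewrite ger0_norm ?subr_ge0 // ltrBlDl (le_lt_trans (le_trans uT Td)) //.
  by rewrite ltrD2l ltr_pdivrMr // ltr_pMr // ltr1n.
have [td1|td1] := leP (tau + d / 2) 1.
  have tau_le : tau <= tau + d / 2 by rewrite lerDl divr_ge0 // ltW.
  have := tau_ub _ (S_right _ tau_le td1 (lexx _)).
  by rewrite gerDl leNgt divr_gt0.
have [_ S1] := S_right 1 tau1 (lexx _) (ltW td1).
by have := S1 1 ler01 (lexx _); rewrite mulr1 -addrA /e -splitr.
Qed.

Lemma norm_segment_le (a b y : X) (rho t : R) : 0 <= t -> t <= 1 ->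
  `|a - y| <= rho -> `|b - y| <= rho -> `|b + t *: (a - b) - y| <= rho.
Proof.
move=> t0 t1 ay hby.
have -> : b + t *: (a - b) - y = (1 - t) *: (b - y) + t *: (a - y).
  rewrite [in RHS]scalerBl scale1r -[in RHS]addrA [- _ + _]addrC -scalerBr.
  by rewrite opprB subrKA addrAC.
apply: le_trans (ler_normD _ _) _.
rewrite !normrZ (ger0_norm t0) ger0_norm ?subr_ge0 //.
apply: le_trans (lerD (ler_wpM2l _ hby) (ler_wpM2l t0 ay)) _; first by rewrite subr_ge0.
by rewrite -mulrDl subrK mul1r.
Qed.

Lemma holder_remainder_le (g : X -> X) (D r rho : R) (a b y : X) :
  (forall x, differentiable g x) -> 0 <= D -> 0 <= r ->
  (forall x x' v, `|'d g x v - 'd g x' v| <= D * `|x - x'| `^ r * `|v|) ->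
  `|a - y| <= rho -> `|b - y| <= rho ->
  `|g a - g b - 'd g y (a - b)| <= D * rho `^ r * `|a - b|.
Proof.
move=> dg D0 r0 holder ay hby.
pose w := a - b; pose xt t := b + t *: w.
pose h t := g (xt t) - 'd g y (xt t).
have -> : g a - g b - 'd g y w = h 1 - h 0.
  rewrite /h /xt scale1r scale0r addr0 subrKC linearB /=.
  by rewrite !opprB addrACA [RHS]addrACA [- g b + _]addrC.
apply: mean_value_le => t t0 t1.
exists ('d g (xt t) w - 'd g y w).
  apply: le_trans (holder _ _ _) _; rewrite ler_wpM2r // ler_wpM2l //.
  apply: ge0_ler_powR; rewrite ?nnegrE //; last exact: norm_segment_le.
  exact: le_trans ay.
move=> e e0.
have w1 : 0 < `|w| + 1 by rewrite ltr_wpDl.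
have [d d0 hd] := differentiable_remainder_le (dg (xt t)) (divr_gt0 e0 w1).
exists (d / (`|w| + 1)); first by rewrite divr_gt0.
move=> s sd.
have swd : `|s *: w| < d.
  rewrite normrZ (le_lt_trans _ (_ : `|s| * (`|w| + 1) < d)) //.
    by rewrite ler_wpM2l // lerDl.
  by rewrite -ltr_pdivlMr.
(* The linear terms [d_y g] cancel, leaving the remainder of [g] at [xt t]. *)
have -> : h (t + s) - h t - s *: ('d g (xt t) w - 'd g y w) =
    g (xt t + s *: w) - g (xt t) - 'd g (xt t) (s *: w).
  have cancel_dy (x p q u v : X) : x - (p + q) - (u - p) - (v - q) = x - u - v.
    by rewrite opprD !opprB !addrA [_ - q + p]addrAC subrK [_ - u + q]addrAC subrK.
  have xts : xt (t + s) = xt t + s *: w by rewrite /xt scalerDl addrA.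
  have dy : 'd g y (xt t + s *: w) = 'd g y (xt t) + s *: 'd g y w.
    by rewrite linearD linearZ.
  by rewrite /h xts dy (scalerBr s ('d g (xt t) w)) cancel_dy [in RHS]linearZ.
apply: le_trans (hd _ swd) _.
rewrite normrZ mulrA mulrAC ler_wpM2r // mulrAC ler_pdivrMr // ler_wpM2l ?ltW //.
by rewrite ltrDl.
Qed.
End MeanValue.

Section Vanishing.
Variable R : realType.

Lemma vanishing_lt (q : nat -> R) : q @ \oo --> 0 ->
  forall e, 0 < e -> exists N, forall k, (N <= k)%N -> q k < e.
Proof.
move=> /cvgrPdist_lt q0 e e0; have [N _ qN] := q0 e e0.
exists N => k Nk; have := qN k Nk; rewrite sub0r normrN.
exact/le_lt_trans/ler_norm.
Qed.

Lemma ler_of_vanishing (q : nat -> R) (a b : R) (N : nat) : q @ \oo --> 0 ->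
  (forall k, (N <= k)%N -> a <= b + q k) -> a <= b.
Proof.
move=> /vanishing_lt q0 hq; apply/ler_addgt0Pr => e e0.
have [M qM] := q0 e e0.
apply: le_trans (hq (maxn N M) (leq_maxl _ _)) _.
by rewrite lerD2l ltW // qM // leq_maxr.
Qed.

Lemma cauchy_modulus_limit (X : completeNormedModType R) (u : nat -> X) (q : nat -> R) :
  (forall k l, (k <= l)%N -> `|u l - u k| <= q k) -> q @ \oo --> 0 ->
  exists z : X, forall k, `|z - u k| <= q k.
Proof.
move=> uq q0.
have /cvg_ex [z uz] : cvgn u.
  apply: cauchy_cvg; apply: cauchy_exP => e e0.
  have [N qN] := vanishing_lt q0 e0.
  exists (u N); rewrite /fmapE -ball_normE; exists N => // m Nm /=.
  by rewrite distrC (le_lt_trans (uq _ _ Nm)) ?qN.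
exists z => k; apply/ler_addgt0Pr => e e0.
have /cvgrPdist_lt /(_ e e0) [N _ uN] := uz.
rewrite -(subrK (u (maxn N k)) z) -addrA addrC.
apply: le_trans (ler_normD _ _) _.
by rewrite lerD ?uq ?leq_maxr // ltW // uN //= leq_maxl.
Qed.
End Vanishing.

Section SequenceSpace.
Variables (R : realType) (mem : set (int -> R)) (bnorm : (int -> R) -> R).
Hypothesis HB : admissible_banach_seq_space mem bnorm.

Lemma bnorm_indicator n : bnorm (seq_indicator R n) = 1.
Proof.
have -> : seq_indicator R n = seq_shift (seq_indicator R 0) (- n).
  by apply/funext => k; rewrite /seq_shift /seq_indicator subr_eq0.
by rewrite (bss_shift HB _ (bss_indicator HB 0).1).2 (bss_indicator0 HB).
Qed.

(* Solidity against [|s n|] times the indicator of [n]. *)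
Lemma bnorm_coord_le s n : mem s -> `|s n| <= bnorm s.
Proof.
move=> ms.
have le_s k : `| `|s n| * seq_indicator R n k| <= `|s k|.
  by rewrite /seq_indicator; case: eqP => [->|_]; rewrite ?mulr1 ?normr_id ?mulr0 ?normr0.
have [_] := bss_solid HB ms le_s.
by rewrite (bss_normZ HB _ (bss_indicator HB n).1) bnorm_indicator mulr1 normr_id.
Qed.

Lemma bss_memB s t : mem s -> mem t -> mem (fun n => s n - t n).
Proof.
move=> ms mt; have := bss_memD HB ms (bss_memZ HB (-1) mt).
by under eq_fun do rewrite mulN1r.
Qed.

Lemma bnorm_distC s t : mem s -> mem t ->
  bnorm (fun n => t n - s n) = bnorm (fun n => s n - t n).
Proof.
move=> ms mt; have := bss_normZ HB (-1) (bss_memB ms mt).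
by under eq_fun do rewrite mulN1r opprB; rewrite normrN normr1 mul1r.
Qed.

Lemma bss_cauchy_limit (u : nat -> int -> R) (q : nat -> R) :
  (forall k, mem (u k)) ->
  (forall k l, (k <= l)%N -> bnorm (fun n => u l n - u k n) <= q k) -> q @ \oo --> 0 ->
  exists2 s, mem s & forall k, bnorm (fun n => s n - u k n) <= q k.
Proof.
move=> mu uq q0.
have [s [ms us]] : exists s, mem s /\ forall e : R, 0 < e ->
    exists N : nat, forall k : nat, (N <= k)%N -> bnorm (fun n => u k n - s n) < e.
  apply: (bss_complete HB mu) => e /(vanishing_lt q0) [N qN].
  exists N => k l Nk Nl; have [kl|/ltnW lk] := leqP k l.
    by rewrite bnorm_distC // (le_lt_trans (uq _ _ kl)) ?qN.
  by rewrite (le_lt_trans (uq _ _ lk)) ?qN.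
exists s => // k; apply/ler_addgt0Pr => e /us [N sN].
pose l := maxn N k.
have -> : (fun n => s n - u k n) = (fun n => (s n - u l n) + (u l n - u k n)).
  by apply/funext => n; rewrite addrA subrK.
apply: le_trans (bss_normD HB (bss_memB ms (mu l)) (bss_memB (mu l) (mu k))) _.
by rewrite addrC lerD ?uq ?leq_maxr // bnorm_distC // ltW // sN // leq_maxl.
Qed.
End SequenceSpace.

Section SequenceSpaceXB.
Variables (R : realType) (mem : set (int -> R)) (bnorm : (int -> R) -> R).
Hypothesis HB : admissible_banach_seq_space mem bnorm.
Variable X : normedModType R.
Implicit Types v w : int -> X.

Lemma xb_solid v w (k : R) : XB_mem mem w -> 0 <= k ->
  (forall n, `|v n| <= k * `|w n|) ->
  XB_mem mem v /\ XB_norm bnorm v <= k * XB_norm bnorm w.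
Proof.
move=> mw k0 vw.
have vw' n : `| `|v n| | <= `|k * `|w n| | by rewrite normr_id ger0_norm ?mulr_ge0.
have [mv] := bss_solid HB (bss_memZ HB k mw) vw'.
by rewrite (bss_normZ HB _ mw) ger0_norm.
Qed.

Lemma xb_add v w : XB_mem mem v -> XB_mem mem w ->
  XB_mem mem (fun n => v n + w n) /\
  XB_norm bnorm (fun n => v n + w n) <= XB_norm bnorm v + XB_norm bnorm w.
Proof.
move=> mv mw.
have vw n : `| `|v n + w n| | <= `| `|v n| + `|w n| |.
  by rewrite normr_id ger0_norm ?addr_ge0 ?ler_normD.
have [mvw vwN] := bss_solid HB (bss_memD HB mv mw) vw.
by split; last exact: le_trans vwN (bss_normD HB mv mw).
Qed.

Lemma xb_memN v : XB_mem mem v -> XB_mem mem (fun n => - v n).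
Proof. by rewrite /XB_mem => mv; under eq_fun do rewrite normrN. Qed.

Lemma xb_normN v : XB_norm bnorm (fun n => - v n) = XB_norm bnorm v.
Proof. by rewrite /XB_norm; under eq_fun do rewrite normrN. Qed.

Lemma xb_sub v w : XB_mem mem v -> XB_mem mem w ->
  XB_mem mem (fun n => v n - w n) /\
  XB_norm bnorm (fun n => v n - w n) <= XB_norm bnorm v + XB_norm bnorm w.
Proof. by move=> mv /xb_memN mw; rewrite -(xb_normN w); apply: xb_add. Qed.

Lemma xb_shift v (m : int) : XB_mem mem v ->
  XB_mem mem (fun n => v (n + m)) /\ XB_norm bnorm (fun n => v (n + m)) = XB_norm bnorm v.
Proof. by move=> mv; exact: (bss_shift HB m mv). Qed.

Lemma xb_zero : XB_mem mem (fun _ => 0 : X) /\ XB_norm bnorm (fun _ => 0 : X) = 0.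
Proof.
rewrite /XB_mem /XB_norm normr0; split; first exact: bss_mem0 HB.
by have := bss_normZ HB 0 (bss_mem0 HB); rewrite normr0 !mul0r.
Qed.

Lemma xb_norm_ge0 v : XB_mem mem v -> 0 <= XB_norm bnorm v.
Proof. exact: bss_norm_ge0. Qed.

Lemma xb_coord_le v n : XB_mem mem v -> `|v n| <= XB_norm bnorm v.
Proof. by move=> /(bnorm_coord_le HB n); rewrite normr_id. Qed.

Lemma xb_norm_eq0 v : XB_mem mem v -> XB_norm bnorm v = 0 -> v = fun _ => 0.
Proof. by move=> mv v0; apply/funext => n; apply/normr0_eq0/(bss_norm_eq0 HB mv v0). Qed.

Lemma xb_geometric_cauchy (zs : nat -> int -> X) (a k : R) : 0 <= k -> k < 1 ->
  (forall j, XB_mem mem (zs j)) ->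
  (forall j, XB_norm bnorm (fun n => zs j.+1 n - zs j n) <= a * k ^+ j) ->
  forall j l, (j <= l)%N -> XB_norm bnorm (fun n => zs l n - zs j n) <= a / (1 - k) * k ^+ j.
Proof.
move=> k0 k1 mzs zs_step j l /subnKC <-.
have k1' : 1 - k != 0 by rewrite subr_eq0 gt_eqF.
pose q i := a / (1 - k) * k ^+ i.
have mD i i' : XB_mem mem (fun n => zs i' n - zs i n) := (xb_sub (mzs i') (mzs i)).1.
have a0 : 0 <= a by have := le_trans (xb_norm_ge0 (mD 0%N 1%N)) (zs_step 0%N); rewrite mulr1.
suff le_q m : XB_norm bnorm (fun n => zs (j + m)%N n - zs j n) <= q j - q (j + m)%N.
  by apply: le_trans (le_q _) _; rewrite gerBl mulr_ge0 ?exprn_ge0 ?divr_ge0 // subr_ge0 ltW.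
elim: m => [|m IH].
  by rewrite addn0 subrr; under eq_fun do rewrite subrr; rewrite xb_zero.2.
have -> : (fun n => zs (j + m.+1)%N n - zs j n) =
    (fun n => (zs (j + m).+1 n - zs (j + m)%N n) + (zs (j + m)%N n - zs j n)).
  by apply/funext => n; rewrite addnS addrA subrK.
apply: le_trans (xb_add (mD _ _) (mD _ _)).2 _; apply: le_trans (lerD (zs_step _) IH) _.
by rewrite /q addnS exprS le_eqVlt; apply/orP; left; apply/eqP; field.
Qed.
End SequenceSpaceXB.

Section CompleteXB.
Variables (R : realType) (mem : set (int -> R)) (bnorm : (int -> R) -> R).
Hypothesis HB : admissible_banach_seq_space mem bnorm.
Variable X : completeNormedModType R.

Lemma xb_cauchy_limit (zs : nat -> int -> X) (q : nat -> R) :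
  (forall k, XB_mem mem (zs k)) ->
  (forall k l, (k <= l)%N -> XB_norm bnorm (fun n => zs l n - zs k n) <= q k) ->
  q @ \oo --> 0 ->
  exists z, forall k, XB_mem mem (fun n => z n - zs k n) /\
                      XB_norm bnorm (fun n => z n - zs k n) <= q k.
Proof.
move=> mzs zsq q0.
have mD k l : XB_mem mem (fun n => zs l n - zs k n) := (xb_sub HB (mzs l) (mzs k)).1.
have zs_pt n : exists zn, forall k, `|zn - zs k n| <= q k.
  apply: cauchy_modulus_limit q0 => k l kl.
  exact: le_trans (xb_coord_le HB n (mD k l)) (zsq _ _ kl).
have [z zq] := choice zs_pt.
exists z => k.
pose u l n := `|zs l n - zs k n|.
have [s ms su] : exists2 s, mem s & forall l, bnorm (fun n => s n - u l n) <= q l.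
  apply: (bss_cauchy_limit HB (fun l => mD k l) _ q0) => l l' ll'.
  apply: le_trans (zsq _ _ ll'); apply: (bss_solid HB (mD l l') _).2 => n.
  by rewrite normr_id /u (le_trans (ler_dist_dist _ _)) // opprB subrKA.
have qq0 : (fun l => q l + q l) @ \oo --> 0 by rewrite -[0 : R]addr0; apply: cvgD.
have sE : s = fun n => `|z n - zs k n|.
  apply/funext => n; apply/eqP; rewrite -subr_eq0 -normr_le0.
  apply: (ler_of_vanishing (N := 0%N) qq0) => l _; rewrite add0r.
  rewrite -(subrK (u l n) (s n)) -addrA.
  apply: le_trans (ler_normD _ _) _; apply: lerD.
    exact: le_trans (bnorm_coord_le HB n (bss_memB HB ms (mD k l))) (su l).
  by rewrite (le_trans (ler_dist_dist _ _)) // /u opprB subrKA distrC.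
rewrite /XB_mem /XB_norm -sE; split => //.
apply: (ler_of_vanishing (N := k) q0) => l kl.
rewrite -[s](funext (fun n => subrK (u l n) (s n))).
apply: le_trans (bss_normD HB (bss_memB HB ms (mD k l)) (mD k l)) _.
by rewrite addrC; apply: lerD; [exact: zsq | exact: su].
Qed.
End CompleteXB.

Definition xb_ball (R : realType) (X : normedModType R) (mem : set (int -> R))
    (bnorm : (int -> R) -> R) (eps : R) (z : int -> X) : Prop :=
  XB_mem mem z /\ XB_norm bnorm z <= eps.

Lemma xb_ball0 (R : realType) (mem : set (int -> R)) (bnorm : (int -> R) -> R)
    (X : normedModType R) (eps : R) :
  admissible_banach_seq_space mem bnorm -> 0 <= eps -> xb_ball mem bnorm eps (fun _ => 0 : X).
Proof. by move=> HB eps0; rewrite /xb_ball (xb_zero HB X).2; split; [exact: (xb_zero HB X).1|]. Qed.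

Section ContractionXB.
Variables (R : realType) (mem : set (int -> R)) (bnorm : (int -> R) -> R).
Hypothesis HB : admissible_banach_seq_space mem bnorm.
Variables (X : completeNormedModType R) (T : (int -> X) -> int -> X) (k eps : R).
Hypotheses (k_ge0 : 0 <= k) (k_lt1 : k < 1) (eps_ge0 : 0 <= eps).
Local Notation ball := (xb_ball mem bnorm eps).
Hypothesis T_ball : forall z, ball z -> ball (T z).
Hypothesis T_contraction : forall z z', ball z -> ball z' ->
  XB_norm bnorm (fun n => T z n - T z' n) <= k * XB_norm bnorm (fun n => z n - z' n).

Lemma xb_contraction_fixpoint : exists2 z, ball z & T z = z.
Proof.
pose zs j := iter j T (fun _ => 0).
have zs_ball j : ball (zs j).
  by elim: j => [|j]; [exact: xb_ball0 | exact: T_ball].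
have zs_step j : XB_norm bnorm (fun n => zs j.+1 n - zs j n) <= eps * k ^+ j.
  elim: j => [|j IH].
    by rewrite expr0 mulr1 /=; under eq_fun do rewrite subr0; exact: (zs_ball 1).2.
  apply: le_trans (T_contraction (zs_ball j.+1) (zs_ball j)) _.
  by rewrite exprS mulrCA ler_wpM2l.
pose q j := eps / (1 - k) * k ^+ j.
have q0 : q @ \oo --> 0 by apply: cvg_geometric; rewrite ger0_norm.
have q_ge0 j : 0 <= q j by rewrite mulr_ge0 ?exprn_ge0 ?divr_ge0 // subr_ge0 ltW.
have zs_cauchy := xb_geometric_cauchy HB k_ge0 k_lt1 (fun j => (zs_ball j).1) zs_step.
have [z zq] := xb_cauchy_limit HB (fun j => (zs_ball j).1) zs_cauchy q0.
have z_split j : z = fun n => (z n - zs j n) + zs j n.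
  by apply/funext => n; rewrite subrK.
have z_ball : ball z.
  split; first by rewrite (z_split 0%N); exact: (xb_add HB (zq 0%N).1 (zs_ball 0%N).1).1.
  apply: (ler_of_vanishing (N := 0%N) q0) => j _; rewrite (z_split j) addrC.
  apply: le_trans (xb_add HB (zq j).1 (zs_ball j).1).2 _.
  by rewrite lerD ?(zq j).2 ?(zs_ball j).2.
exists z => //.
have mTz := (xb_sub HB (T_ball z_ball).1 z_ball.1).1.
have qq0 : (fun j => q j + q j) @ \oo --> 0 by rewrite -[0 : R]addr0; apply: cvgD.
have Tz0 : XB_norm bnorm (fun n => T z n - z n) = 0.
  apply/eqP; rewrite eq_le (xb_norm_ge0 HB mTz) andbT.
  apply: (ler_of_vanishing (N := 0%N) qq0) => j _; rewrite add0r.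
  have -> : (fun n => T z n - z n) =
      (fun n => (T z n - T (zs j) n) - (z n - zs j.+1 n)).
    by apply/funext => n; rewrite opprB subrKA.
  have mT := (xb_sub HB (T_ball z_ball).1 (zs_ball j.+1).1).1.
  apply: le_trans (xb_sub HB mT (zq j.+1).1).2 _.
  apply: lerD; first apply: le_trans (T_contraction z_ball (zs_ball j)) _.
    exact: le_trans (ler_wpM2l k_ge0 (zq j).2) (ler_piMl (q_ge0 j) (ltW k_lt1)).
  apply: le_trans (zq j.+1).2 _; rewrite /q exprS mulrCA.
  exact: ler_piMl (q_ge0 j) (ltW k_lt1).
apply/funext => n; apply/eqP; rewrite -subr_eq0; apply/eqP.
by have /(congr1 (fun v => v n)) := xb_norm_eq0 HB mTz Tz0.
Qed.

Lemma xb_contraction_fixpoint_unique z z' :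
  ball z -> ball z' -> T z = z -> T z' = z' -> z = z'.
Proof.
move=> bz bz' Tz Tz'.
have mD := (xb_sub HB bz.1 bz'.1).1.
have N0 : XB_norm bnorm (fun n => z n - z' n) = 0.
  have := T_contraction bz bz'; rewrite Tz Tz' => le_k.
  apply/eqP; rewrite eq_le (xb_norm_ge0 HB mD) andbT.
  have k1 : 0 < 1 - k by rewrite subr_gt0.
  by rewrite -(pmulr_rle0 _ k1) mulrBl mul1r subr_le0.
apply/funext => n; apply/eqP; rewrite -subr_eq0; apply/eqP.
by have /(congr1 (fun v => v n)) := xb_norm_eq0 HB mD N0.
Qed.
End ContractionXB.

Section SemilinearXB.
Variables (R : realType) (mem : set (int -> R)) (bnorm : (int -> R) -> R).
Hypothesis HB : admissible_banach_seq_space mem bnorm.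
Variables (X : completeNormedModType R) (B : int -> X -> X).
Variables (N : (int -> X) -> int -> X) (K theta eps : R).
Hypothesis B_sub : forall m, {morph B m : u v / u - v}.
Hypothesis B_solvable : forall w, XB_mem mem w ->
  exists x, XB_mem mem x /\ (forall n, x n - B (n - 1) (x (n - 1)) = w n) /\
            XB_norm bnorm x <= K * XB_norm bnorm w.
Hypothesis B_injective : forall x x', XB_mem mem x -> XB_mem mem x' ->
  (forall n, x n - B (n - 1) (x (n - 1)) = x' n - B (n - 1) (x' (n - 1))) -> x = x'.
Hypotheses (K_ge0 : 0 <= K) (theta_ge0 : 0 <= theta) (K_theta : K * theta <= 2^-1) (eps_ge0 : 0 <= eps).
Local Notation ball := (xb_ball mem bnorm eps).
Hypothesis N_lipschitz : forall z z', ball z -> ball z' ->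
  XB_mem mem (fun n => N z n - N z' n) /\
  XB_norm bnorm (fun n => N z n - N z' n) <= theta * XB_norm bnorm (fun n => z n - z' n).
Hypothesis N_at0 : XB_mem mem (N (fun _ => 0)) /\ K * XB_norm bnorm (N (fun _ => 0)) <= eps / 2.

Lemma semilinear_fixpoint_map : exists T : (int -> X) -> int -> X,
  [/\ forall z, ball z -> T z = z <-> (forall n, z n - B (n - 1) (z (n - 1)) = N z n),
      forall z, ball z -> ball (T z) &
      forall z z', ball z -> ball z' ->
        XB_norm bnorm (fun n => T z n - T z' n) <= 2^-1 * XB_norm bnorm (fun n => z n - z' n)].
Proof.
have solution w : exists x, XB_mem mem w ->
    XB_mem mem x /\ (forall n, x n - B (n - 1) (x (n - 1)) = w n) /\
    XB_norm bnorm x <= K * XB_norm bnorm w.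
  have [/B_solvable [x hx]|nw] := pselect (XB_mem mem w); first by exists x => _.
  by exists w => /nw.
have [Sol Sol_spec] := choice solution.
have ball0 : ball (fun _ => 0) := xb_ball0 X HB eps_ge0.
have N_split z : N z = fun n => (N z n - N (fun _ => 0) n) + N (fun _ => 0) n.
  by apply/funext => n; rewrite subrK.
have mN z : ball z -> XB_mem mem (N z).
  move=> bz; rewrite N_split; exact: (xb_add HB (N_lipschitz bz ball0).1 N_at0.1).1.
exists (fun z => Sol (N z)); split.
- move=> z bz; have [mS [Seq _]] := Sol_spec _ (mN z bz); split=> [Sz n | zeq].
    by rewrite -{1 2}Sz Seq.
  by apply: B_injective mS bz.1 _ => n; rewrite Seq zeq.
- move=> z bz; have [mS [_ SN]] := Sol_spec _ (mN z bz); split => //.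
  apply: le_trans SN _; rewrite N_split.
  have h1 := (xb_add HB (N_lipschitz bz ball0).1 N_at0.1).2.
  apply: le_trans (ler_wpM2l K_ge0 h1) _.
  rewrite mulrDr [eps]splitr; apply: lerD; last exact: N_at0.2.
  have z0 : (fun n => z n - 0) = z by apply/funext => n; rewrite subr0.
  have := (N_lipschitz bz ball0).2; rewrite z0 => Nz.
  apply: le_trans (ler_wpM2l K_ge0 Nz) _; rewrite mulrA.
  apply: le_trans (ler_wpM2l (mulr_ge0 K_ge0 theta_ge0) bz.2) _.
  by rewrite [eps / 2]mulrC ler_wpM2r.
- move=> z z' bz bz'.
  have [mS [Seq _]] := Sol_spec _ (mN z bz).
  have [mS' [Seq' _]] := Sol_spec _ (mN z' bz').
  have [mD ND] := N_lipschitz bz bz'.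
  have [mSD [SeqD SND]] := Sol_spec _ mD.
  have -> : (fun n => Sol (N z) n - Sol (N z') n) = Sol (fun n => N z n - N z' n).
    apply: B_injective (xb_sub HB mS mS').1 mSD _ => n.
    by rewrite B_sub subrACA Seq Seq' SeqD.
  apply: le_trans SND _; apply: le_trans (ler_wpM2l K_ge0 ND) _.
  by rewrite mulrA ler_wpM2r // (xb_norm_ge0 HB (xb_sub HB bz.1 bz'.1).1).
Qed.

Let half_ge0 : 0 <= 2^-1 :> R. Proof. by rewrite invr_ge0 ler0n. Qed.
Let half_lt1 : 2^-1 < 1 :> R. Proof. by rewrite invf_lt1 ?ltr1n. Qed.

Lemma semilinear_solution_exists :
  exists2 z, ball z & forall n, z n - B (n - 1) (z (n - 1)) = N z n.
Proof.
have [T [T_fix T_ball T_contr]] := semilinear_fixpoint_map.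
have [z bz Tz] := xb_contraction_fixpoint HB half_ge0 half_lt1 eps_ge0 T_ball T_contr.
by exists z => //; apply/(T_fix z bz).
Qed.

Lemma semilinear_solution_unique z z' : ball z -> ball z' ->
  (forall n, z n - B (n - 1) (z (n - 1)) = N z n) ->
  (forall n, z' n - B (n - 1) (z' (n - 1)) = N z' n) -> z = z'.
Proof.
move=> bz bz' zeq z'eq; have [T [T_fix T_ball T_contr]] := semilinear_fixpoint_map.
apply: (xb_contraction_fixpoint_unique HB half_lt1 T_contr) => //.
  exact/(T_fix z bz).
exact/(T_fix z' bz').
Qed.
End SemilinearXB.

Section Linearization.
Variables (R : realType) (X : normedModType R).

Lemma bounded_linear_morphB (T : X -> X) : bounded_linear T -> {morph T : u v / u - v}.
Proof. by move=> [T_lin _] u v; rewrite -scaleN1r addrC T_lin scaleN1r addrC. Qed.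

Lemma bounded_linear_derivative_shift (A f : int -> X -> X) (y : int -> X) (M c : R) m :
  bounded_linear (A m) -> (forall x, `|A m x| <= M * `|x|) ->
  (forall v, `|'d (f m) (y m) v| <= c * `|v|) ->
  bounded_linear (fun v => A m v + 'd (f m) (y m) v).
Proof.
move=> [A_lin _] AM dfc; split=> [a u v|].
  by rewrite A_lin linearP scalerDr addrACA.
exists (M + c) => v; rewrite mulrDl.
by apply: le_trans (ler_normD _ _) _; rewrite lerD.
Qed.

Definition shadowing_rhs (F B : int -> X -> X) (y z : int -> X) (n : int) : X :=
  F (n - 1) (y (n - 1) + z (n - 1)) - y n - B (n - 1) (z (n - 1)).

Lemma shadowing_rhsP (F B : int -> X -> X) (y z : int -> X) :
  (forall n, y (n + 1) + z (n + 1) = F n (y n + z n)) <->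
  (forall n, z n - B (n - 1) (z (n - 1)) = shadowing_rhs F B y z n).
Proof.
rewrite /shadowing_rhs; split=> orbit n.
  by rewrite -[in y n](subrK 1 n) -orbit subrK [y n + _]addrC addrK.
by have := orbit (n + 1); rewrite addrK => /addIr ->; rewrite subrKC.
Qed.
End Linearization.

Section ShadowingOperator.
Variables (R : realType) (mem : set (int -> R)) (bnorm : (int -> R) -> R).
Hypothesis HB : admissible_banach_seq_space mem bnorm.
Variables (X : normedModType R) (A f : int -> X -> X) (y : int -> X) (D r : R).
Hypothesis A_sub : forall m, {morph A m : u v / u - v}.
Hypothesis f_diff : forall n x, differentiable (f n) x.
Hypotheses (D_ge0 : 0 <= D) (r_ge0 : 0 <= r).
Hypothesis f_holder : forall n x x' v,
  `|'d (f n) x v - 'd (f n) x' v| <= D * `|x - x'| `^ r * `|v|.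
Let F n x := A n x + f n x.
Let B n v := A n v + 'd (f n) (y n) v.

Lemma shadowing_rhsB z z' n : let m := n - 1 in
  shadowing_rhs F B y z n - shadowing_rhs F B y z' n =
  f m (y m + z m) - f m (y m + z' m) - 'd (f m) (y m) ((y m + z m) - (y m + z' m)).
Proof.
move=> m; rewrite /shadowing_rhs -/m subrACA [X in X - _]subrACA subrr subr0.
rewrite /F /B !(subr_addACA (A m _)) subr_addACA.
rewrite -(A_sub m (y m + z m)) -(A_sub m (z m)) (subr_addACA (y m)) !subrr !add0r.
by rewrite [X in X + _]subrr add0r -linearB.
Qed.

Lemma shadowing_rhs_lipschitz eps z z' :
  xb_ball mem bnorm eps z -> xb_ball mem bnorm eps z' ->
  XB_mem mem (fun n => shadowing_rhs F B y z n - shadowing_rhs F B y z' n) /\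
  XB_norm bnorm (fun n => shadowing_rhs F B y z n - shadowing_rhs F B y z' n) <=
    D * eps `^ r * XB_norm bnorm (fun n => z n - z' n).
Proof.
move=> bz bz'; have [mD _] := xb_sub HB bz.1 bz'.1.
have [mDs <-] := xb_shift HB (-1) mD.
apply: (xb_solid HB mDs); first by rewrite mulr_ge0 ?powR_ge0.
move=> n; rewrite shadowing_rhsB (subr_addACA (y _)) subrr add0r.
have near_y (w : int -> X) : xb_ball mem bnorm eps w -> `|y (n - 1) + w (n - 1) - y (n - 1)| <= eps.
  by move=> [mw Nw]; rewrite addrAC subrr add0r (le_trans (xb_coord_le HB _ mw)).
have := holder_remainder_le (f_diff _) D_ge0 r_ge0 (f_holder _) (near_y _ bz) (near_y _ bz').
by rewrite (subr_addACA (y _)) subrr add0r.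
Qed.

Lemma shadowing_rhs_at0 :
  let g := fun m => y (m + 1) - F m (y m) in XB_mem mem g ->
  XB_mem mem (shadowing_rhs F B y (fun _ => 0)) /\
  XB_norm bnorm (shadowing_rhs F B y (fun _ => 0)) = XB_norm bnorm g.
Proof.
move=> g mg; have A0 m : A m 0 = 0 by rewrite -[w in A m w](subrr (0 : X)) A_sub subrr.
have -> : shadowing_rhs F B y (fun _ => 0) = fun n => - g (n + -1).
  apply/funext => n; rewrite /shadowing_rhs /g /B addr0 A0 linear0 addr0 subr0 subrK.
  by rewrite opprB.
have [mgs <-] := xb_shift HB (-1) mg.
by split; [exact: xb_memN | exact: xb_normN].
Qed.
End ShadowingOperator.

Section Shadowing.
Variables (R : realType) (mem : set (int -> R)) (bnorm : (int -> R) -> R).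
Hypothesis HB : admissible_banach_seq_space mem bnorm.
Variables (X : completeNormedModType R) (A f : int -> X -> X) (y : int -> X) (D r K eps : R).
Hypothesis A_sub : forall m, {morph A m : u v / u - v}.
Hypothesis f_diff : forall n x, differentiable (f n) x.
Hypotheses (D_ge0 : 0 <= D) (r_ge0 : 0 <= r).
Hypothesis f_holder : forall n x x' v,
  `|'d (f n) x v - 'd (f n) x' v| <= D * `|x - x'| `^ r * `|v|.
Let F n x := A n x + f n x.
Let B n v := A n v + 'd (f n) (y n) v.
Hypothesis B_solvable : forall w, XB_mem mem w ->
  exists x, XB_mem mem x /\ (forall n, x n - B (n - 1) (x (n - 1)) = w n) /\
            XB_norm bnorm x <= K * XB_norm bnorm w.
Hypothesis B_injective : forall x x', XB_mem mem x -> XB_mem mem x' ->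
  (forall n, x n - B (n - 1) (x (n - 1)) = x' n - B (n - 1) (x' (n - 1))) -> x = x'.
Hypotheses (K_ge0 : 0 <= K) (eps_ge0 : 0 <= eps) (K_holder : K * (D * eps `^ r) <= 2^-1).
Hypothesis defect_mem : XB_mem mem (fun m => y (m + 1) - F m (y m)).
Hypothesis defect_small : K * XB_norm bnorm (fun m => y (m + 1) - F m (y m)) <= eps / 2.

Let B_sub m : {morph B m : u v / u - v}.
Proof. by move=> u v; rewrite /B A_sub linearB subr_addACA. Qed.

Let theta_ge0 : 0 <= D * eps `^ r. Proof. by rewrite mulr_ge0 ?powR_ge0. Qed.

Let N_at0 : XB_mem mem (shadowing_rhs F B y (fun _ => 0)) /\
  K * XB_norm bnorm (shadowing_rhs F B y (fun _ => 0)) <= eps / 2.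
Proof. by have [mN0 ->] := shadowing_rhs_at0 HB (y := y) A_sub defect_mem. Qed.

Let N_lipschitz := shadowing_rhs_lipschitz HB y A_sub f_diff D_ge0 r_ge0 f_holder (eps := eps).

Lemma shadowing_orbit_exists : exists x, (forall n, x (n + 1) = F n (x n)) /\
  XB_mem mem (fun n => x n - y n) /\ XB_norm bnorm (fun n => x n - y n) <= eps.
Proof.
have [z bz zeq] := semilinear_solution_exists HB B_sub B_solvable B_injective
  K_ge0 theta_ge0 K_holder eps_ge0 N_lipschitz N_at0.
exists (fun n => y n + z n); split; first exact/(shadowing_rhsP _ B).
by have -> : (fun n => y n + z n - y n) = z by apply/funext => n; rewrite addrC addKr.
Qed.

Lemma shadowing_orbit_unique x x' :
  (forall n, x (n + 1) = F n (x n)) -> XB_mem mem (fun n => x n - y n) ->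
  XB_norm bnorm (fun n => x n - y n) <= eps ->
  (forall n, x' (n + 1) = F n (x' n)) -> XB_mem mem (fun n => x' n - y n) ->
  XB_norm bnorm (fun n => x' n - y n) <= eps -> x = x'.
Proof.
have shift_eq (u : int -> X) : (forall n, u (n + 1) = F n (u n)) ->
    forall n, (u n - y n) - B (n - 1) (u (n - 1) - y (n - 1)) =
              shadowing_rhs F B y (fun n => u n - y n) n.
  by move=> ou; apply/shadowing_rhsP => n; rewrite !subrKC.
move=> ox mx Nx ox' mx' Nx'; apply/funext => n.
have /(congr1 (fun v => y n + v n)) := semilinear_solution_unique HB B_sub B_solvable
  B_injective K_ge0 theta_ge0 K_holder eps_ge0 N_lipschitz N_at0 (conj mx Nx) (conj mx' Nx')
  (shift_eq x ox) (shift_eq x' ox').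
by rewrite !subrKC.
Qed.
End Shadowing.

Lemma holder_radius_le (R : realType) (K D r eps : R) : 0 < K -> 0 < D -> 0 < r ->
  0 <= eps -> eps <= ((2 * K * D)^-1) `^ r^-1 -> K * (D * eps `^ r) <= 2^-1.
Proof.
move=> K0 D0 r0 eps0 eps_le.
apply: le_trans (_ : K * (D * (((2 * K * D)^-1) `^ r^-1) `^ r) <= 2^-1).
  rewrite ler_pM2l // ler_pM2l //; apply: ge0_ler_powR => //; first exact: ltW.
  by rewrite nnegrE powR_ge0.
have KD : 0 < 2 * K * D by rewrite !mulr_gt0.
rewrite -powRrM mulVf ?gt_eqF // powRr1 ?invr_ge0 ?(ltW KD) //.
suff -> : K * (D / (2 * K * D)) = 2^-1 by [].
by field; rewrite !gt_eqF.
Qed.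

Theorem theorem3p4 (R : realType) (X : completeNormedModType R)
  (mem : set (int -> R)) (bnorm : (int -> R) -> R)
  (A : int -> X -> X) (c : R) (f : int -> X -> X) (D r : R) :
  admissible_banach_seq_space mem bnorm ->
  (forall m, bounded_linear (A m)) ->
  (forall m, exists Ainv : X -> X, bounded_linear Ainv /\
       (forall x, A m (Ainv x) = x) /\ (forall x, Ainv (A m x) = x)) ->
  (exists M : R, forall m x, `|A m x| <= M * `|x|) ->
  exp_dichotomy A ->
  admissible_perturbation_constant mem bnorm A c ->
  (forall n x, differentiable (f n) x) ->
  (forall n x v, `|'d (f n) x v| <= c * `|v|) ->
  (exists M : R, forall n x, `|f n x| <= M) ->
  0 < D -> 0 < r ->
  (forall n x y v, `|'d (f n) x v - 'd (f n) y v| <= D * `|x - y| `^ r * `|v|) ->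
  let F := fun n x => A n x + f n x in
  exists L : R, 0 < L /\ exists eps0 : R, 0 < eps0 /\
  forall eps : R, 0 < eps -> eps <= eps0 ->
  forall y : int -> X, pseudotrajectory mem bnorm F (L * eps) y ->
    (exists x : int -> X, (forall n, x (n + 1) = F n (x n)) /\
       XB_mem mem (fun n => x n - y n) /\ XB_norm bnorm (fun n => x n - y n) <= eps) /\
    (forall x x' : int -> X,
       (forall n, x (n + 1) = F n (x n)) -> XB_mem mem (fun n => x n - y n) ->
       XB_norm bnorm (fun n => x n - y n) <= eps ->
       (forall n, x' (n + 1) = F n (x' n)) -> XB_mem mem (fun n => x' n - y n) ->
       XB_norm bnorm (fun n => x' n - y n) <= eps -> x = x').
Proof.
move=> HB A_lin _ [MA A_bound] _ [_ [K [K_gt0 K_spec]]] f_diff df_le_c _ D_gt0 r_gt0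
  f_holder F.
exists (2 * K)^-1; split; first by rewrite invr_gt0 mulr_gt0.
exists (((2 * K * D)^-1) `^ r^-1); split; first by rewrite powR_gt0 // invr_gt0 !mulr_gt0.
move=> eps eps_gt0 eps_le y [mg Ng].
pose B n v := A n v + 'd (f n) (y n) v.
have B_lin m : bounded_linear (B m).
  exact: bounded_linear_derivative_shift (A_lin m) (A_bound m) (df_le_c m (y m)).
have AB_close m x : `|A m x - B m x| <= c * `|x|.
  by rewrite /B opprD addrA subrr add0r normrN.
have [_ [_ [B_solvable B_injective]]] := K_spec B B_lin AB_close.
have defect_small : K * XB_norm bnorm (fun m => y (m + 1) - F m (y m)) <= eps / 2.
  apply: le_trans (ler_wpM2l (ltW K_gt0) Ng) _.
  suff -> : K * ((2 * K)^-1 * eps) = eps / 2 by [].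
  by field; rewrite gt_eqF.
have K_holder := holder_radius_le K_gt0 D_gt0 r_gt0 (ltW eps_gt0) eps_le.
have A_sub m := bounded_linear_morphB (A_lin m).
split.
  exact (shadowing_orbit_exists HB A_sub f_diff (ltW D_gt0) (ltW r_gt0) f_holder
    B_solvable B_injective (ltW K_gt0) (ltW eps_gt0) K_holder mg defect_small).
exact (shadowing_orbit_unique HB A_sub f_diff (ltW D_gt0) (ltW r_gt0) f_holder
  B_solvable B_injective (ltW K_gt0) (ltW eps_gt0) K_holder mg defect_small).
Qed.
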